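(* For every integer $t\ge 0$: $m_2^{(1)}(3,3t+2)=15t+8$, $m_2^{(1)}(3,3t+3)=15t+15$, and $m_2^{(1)}(3,3t+4)=15t+16$.
   Context: For a prime power $q$ and $N\ge1$, a multiset of points in $\mathrm{PG}(N,q)$ is a map $\mathcal{K}$ from the points to $\mathbb{Z}_{\ge0}$, with $\mathcal{K}(S)=\sum_{P\in S}\mathcal{K}(P)$; its cardinality is $\mathcal{K}(\mathrm{PG}(N,q))$. Dimensions are projective (lines have dimension 1). For $0\le r\le N-1$ and a positive integer $w$, $m_q^{(r)}(N,w)$ is the maximum cardinality of a multiset of points in $\mathrm{PG}(N,q)$ such that every $r$-dimensional subspace has multiplicity at most $w$. *)

From HB Require Import structures.
From mathcomp Require Import all_boot all_order all_algebra.
Set Implicit Arguments. Unset Strict Implicit. Unset Printing Implicit Defensive.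
Import GRing.Theory.

(* Projective geometry PG(N, F) over a finite field F, modelled inside the
   vector space F^(N+1) = 'rV[F]_(N.+1).  A (projective) subspace of
   projective dimension r is a vector subspace of (vector) dimension r+1,
   represented canonically by the square matrix <<U>>%MS spanning it
   (so each subspace has exactly one representative U with U = <<U>>). *)

Definition pg_subspaces (F : finFieldType) (N r : nat) : {set 'M[F]_(N.+1)} :=
  [set U : 'M[F]_(N.+1) | (U == <<U>>%MS) && (\rank U == r.+1)].

Definition pg_points (F : finFieldType) (N : nat) : {set 'M[F]_(N.+1)} :=
  pg_subspaces F N 0.

(* A multiset of points: a map K from points to nat (values of K outside
   the point set are irrelevant).  K(S) = sum of K(P) over points P in S. *)
Definition mult (F : finFieldType) (N : nat) (K : 'M[F]_(N.+1) -> nat)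
  (S : 'M[F]_(N.+1)) : nat :=
  \sum_(P in pg_points F N | (P <= S)%MS) K P.

Definition card_ms (F : finFieldType) (N : nat) (K : 'M[F]_(N.+1) -> nat) : nat :=
  \sum_(P in pg_points F N) K P.

Definition r_bounded (F : finFieldType) (N r w : nat) (K : 'M[F]_(N.+1) -> nat) :=
  forall S, S \in pg_subspaces F N r -> @mult F N K S <= w.

(* m is the maximum cardinality m_q^{(r)}(N,w) (with q = #|F|). *)
Definition is_m (F : finFieldType) (N r w m : nat) : Prop :=
  (exists K, @r_bounded F N r w K /\ @card_ms F N K = m) /\
  (forall K, @r_bounded F N r w K -> @card_ms F N K <= m).

(* Over F_2 the points of PG(N,2) are the nonzero vectors v and the lines are
   the triples {v, u, v + u}.  Summing the line bound w over the 2^N - 1 lines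
   through a point of maximal multiplicity M covers that point 2^N - 1 times
   and every other point once, so |K| + (2^N - 2) M <= (2^N - 1) w, while
   trivially |K| <= (2^(N+1) - 1) M.  For N = 3 this gives |K| <= 15 M and
   |K| + 6 M <= 7 w, whose optimum over M is the claimed value.  It is attained
   by t copies of the space plus the 8 points off a plane (a line meets them in
   0 or 2 points), by t + 1 copies of the space, and by t + 1 copies of the
   space plus one point. *)

From mathcomp Require Import all_boot all_order all_algebra.
From mathcomp Require Import zify.
Set Implicit Arguments. Unset Strict Implicit. Unset Printing Implicit Defensive.
Import GRing.Theory.

Section Multisets.

Variables (F : finFieldType) (N : nat).
Implicit Types (K : 'M[F]_N.+1 -> nat) (P S : 'M[F]_N.+1).

Lemma mult_add K1 K2 S : mult (fun P => K1 P + K2 P) S = mult K1 S + mult K2 S.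
Proof. exact: big_split. Qed.

Lemma card_ms_add K1 K2 : card_ms (fun P => K1 P + K2 P) = card_ms K1 + card_ms K2.
Proof. exact: big_split. Qed.

Lemma mult_pt_indicator_le1 P0 S : mult (fun P => P == P0 : nat) S <= 1.
Proof.
rewrite /mult; have [P0S | P0nS] := boolP ((P0 \in pg_points F N) && (P0 <= S)%MS).
  by rewrite (bigD1 P0) //= eqxx big1 // => P /andP[_ /negbTE ->].
by rewrite big1 // => P PS; apply/eqP; rewrite eqb0; apply: contraNneq P0nS => <-.
Qed.

Lemma card_ms_pt_indicator P0 :
  P0 \in pg_points F N -> card_ms (fun P => P == P0 : nat) = 1.
Proof. by move=> P0pt; rewrite /card_ms (bigD1 P0) //= eqxx big1 // => P /andP[_ /negbTE ->]. Qed.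

End Multisets.

Local Open Scope ring_scope.

Lemma eq_genmx_subrank (F : fieldType) m n (U : 'M[F]_n) (A : 'M[F]_(m, n)) :
  U = <<U>>%MS -> (A <= U)%MS -> \rank A = \rank U -> U = <<A>>%MS.
Proof.
move=> defU sAU rAU; have eqAU : (A == U)%MS by rewrite -(mxrank_leqif_eq sAU) rAU.
by rewrite defU; apply/genmxP/eqmxP/eqmx_sym/eqmxP.
Qed.

Lemma const_mx1_neq0 (R : nzRingType) m n : const_mx 1 != 0 :> 'M[R]_(m.+1, n.+1).
Proof. by apply/eqP => /matrixP/(_ 0 0)/eqP; rewrite !mxE oner_eq0. Qed.

Local Notation F2 := ('F_2 : finFieldType).

Lemma F2_nz_eq1 (a : F2) : a != 0 -> a = 1.
Proof. by case: a => [[|[|a]]] //= lt_a _; apply: val_inj. Qed.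

Lemma addmx_F2 m n (A : 'M[F2]_(m, n)) : A + A = 0.
Proof. by rewrite -mulr2n -scaler_nat (pchar_Fp_0 (isT : prime 2)) scale0r. Qed.

Lemma oppmx_F2 m n (A : 'M[F2]_(m, n)) : - A = A.
Proof. by apply/esym/eqP; rewrite -addr_eq0 addmx_F2. Qed.

Lemma sub_rV_F2 n (v u : 'rV[F2]_n) : v != 0 -> (v <= u)%MS -> v = u.
Proof.
move=> nz_v /sub_rVP[a def_v]; move: nz_v; rewrite def_v.
by have [-> | /F2_nz_eq1 ->] := eqVneq a 0; rewrite ?scale0r ?eqxx // scale1r.
Qed.

Lemma rV1_F2_nz_eq (x y : 'rV[F2]_1) : x != 0 -> y != 0 -> x = y.
Proof.
by move=> nz_x nz_y; apply: sub_rV_F2 nz_x _; rewrite submx_full // /row_full rank_rV nz_y.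
Qed.

Lemma count_rV1_F2_neq0 (x y : 'rV[F2]_1) :
  ((x != 0%R) + (y != 0%R) + (x + y != 0%R)%R <= 2)%N.
Proof.
have [-> | nz_x] := eqVneq x 0; first by rewrite add0r; case: (y != 0).
have [-> | nz_y] := eqVneq y 0; first by rewrite addr0 nz_x.
by rewrite (rV1_F2_nz_eq nz_x nz_y) addmx_F2 eqxx.
Qed.

Section BinaryProjectiveSpace.

Variable N : nat.
Local Notation V := 'rV[F2]_N.+1.
Implicit Types (K : 'M[F2]_N.+1 -> nat) (S : 'M[F2]_N.+1) (v u : V).

Lemma genmx_point v : v != 0 -> <<v>>%MS \in pg_points F2 N.
Proof. by move=> nz_v; rewrite inE genmx_id eqxx genmxE rank_rV nz_v. Qed.

Lemma pg_pointsE : pg_points F2 N = [set <<v>>%MS | v in [set v : V | v != 0]].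
Proof.
apply/setP => P; apply/idP/imsetP => [|[v]]; last by rewrite inE => nz_v ->; apply: genmx_point.
rewrite inE => /andP[/eqP defP /eqP rP].
have /rowV0Pn[v svP nz_v] : P != 0 by rewrite -mxrank_eq0 rP.
by exists v; rewrite ?inE // (eq_genmx_subrank defP svP) // rank_rV nz_v rP.
Qed.

Lemma genmx_rV_inj : {in [set v : V | v != 0] &, injective (fun v => <<v>>%MS)}.
Proof. by move=> v u; rewrite inE => nz_v _ /genmxP/andP[svu _]; apply: sub_rV_F2. Qed.

Lemma mult_rV K S : mult K S = (\sum_(v : V | (v != 0%R) && (v <= S)%MS) K <<v>>%MS)%N.
Proof.
rewrite /mult pg_pointsE big_mkcondr big_imset /=; last exact: genmx_rV_inj.
by rewrite [RHS]big_mkcondr; apply: eq_big => [v|v _]; rewrite ?inE ?genmxE.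
Qed.

Lemma card_ms_rV K : card_ms K = (\sum_(v : V | v != 0%R) K <<v>>%MS)%N.
Proof.
rewrite /card_ms pg_pointsE big_imset /=; last exact: genmx_rV_inj.
by apply: eq_bigl => v; rewrite inE.
Qed.

Section Line.

Variables (v u : V).
Hypotheses (nz_v : v != 0) (nz_u : u != 0) (neq_uv : u != v).

Lemma line_third_neq0 : v + u != 0.
Proof. by apply: contraNneq neq_uv => /eqP; rewrite addr_eq0 oppmx_F2 => /eqP->. Qed.

Lemma line_third_neqv : v + u != v.
Proof. by apply: contraNneq nz_u => /(canRL (addKr v))->; rewrite addNr. Qed.

Lemma line_third_nequ : v + u != u.
Proof. by apply: contraNneq nz_v => /(canRL (addrK u))->; rewrite subrr. Qed.

Lemma rank_line : \rank (v + u)%MS = 2.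
Proof.
apply/eqP; rewrite eqn_leq; apply/andP; split.
  by have [+ _] := mxrank_adds_leqif v u; rewrite !rank_rV nz_v nz_u.
have ltv : (v < v + u)%MS.
  rewrite ltmxE addsmxSl addsmx_sub submx_refl /=.
  by apply: contra neq_uv => /(sub_rV_F2 nz_u)->.
by have := rank_ltmx ltv; rewrite rank_rV nz_v.
Qed.

Lemma genmx_line : <<(v + u)%MS>>%MS \in pg_subspaces F2 N 1.
Proof. by rewrite inE genmx_id eqxx genmxE rank_line. Qed.

Lemma line_rVE (w : V) : (w != 0) && (w <= v + u)%MS = (w \in [:: v; u; v + u]).
Proof.
apply/idP/idP => [/andP[nz_w /sub_addsmxP[[x y] /= def_w]] | ].
  move: nz_w; rewrite def_w.
  have /sub_rVP[a ->] : (x *m v <= v)%MS by apply: submxMl.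
  have /sub_rVP[b ->] : (y *m u <= u)%MS by apply: submxMl.
  have [-> | /F2_nz_eq1 ->] := eqVneq a 0; have [-> | /F2_nz_eq1 ->] := eqVneq b 0;
    by rewrite ?scale0r ?scale1r ?add0r ?addr0 ?eqxx ?inE ?eqxx ?orbT.
rewrite !inE => /or3P[] /eqP ->.
- by rewrite nz_v addsmxSl.
- by rewrite nz_u addsmxSr.
- by rewrite line_third_neq0 addmx_sub_adds.
Qed.

Lemma mult_line K :
  mult K <<(v + u)%MS>>%MS = (K <<v>>%MS + K <<u>>%MS + K <<v + u>>%MS)%N.
Proof.
rewrite mult_rV (eq_bigl (mem [:: v; u; v + u])) => [|w]; last by rewrite genmxE line_rVE.
rewrite -big_uniq /= ?big_cons ?big_nil ?addn0 ?addnA // !inE negb_or.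
by rewrite eq_sym neq_uv eq_sym line_third_neqv eq_sym line_third_nequ.
Qed.

End Line.

Lemma pg_line_rV S : S \in pg_subspaces F2 N 1 ->
  exists v u, [/\ v != 0, u != 0, u != v & S = <<(v + u)%MS>>%MS].
Proof.
rewrite inE => /andP[/eqP defS /eqP rS].
have /rowV0Pn[v svS nz_v] : S != 0 by rewrite -mxrank_eq0 rS.
have /row_subPn[i not_svi] : ~~ (S <= v)%MS.
  by apply: contraTN isT => /mxrankS; rewrite rank_rV nz_v rS.
set u := row i S in not_svi.
have nz_u : u != 0 by apply: contraNneq not_svi => ->; rewrite sub0mx.
have neq_uv : u != v by apply: contraNneq not_svi => ->; rewrite submx_refl.
exists v, u; split => //; apply: eq_genmx_subrank defS _ _.
  by rewrite addsmx_sub svS row_sub.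
by rewrite rank_line.
Qed.

Lemma card_rV_neq0 : #|[set v : V | v != 0]| = (2 ^ N.+1 - 1)%N.
Proof.
rewrite (_ : [set v : V | v != 0] = [set~ 0]); last by apply/setP => v; rewrite !inE.
by rewrite cardsC1 card_mx card_Fp // mul1n subn1.
Qed.

Lemma sum_rV_neq0_const c : (\sum_(v : V | v != 0%R) c = (2 ^ N.+1 - 1) * c)%N.
Proof. by rewrite -card_rV_neq0 -sum_nat_const; apply: eq_bigl => v; rewrite inE. Qed.

Lemma sum_rV_neq0D1_const v c : v != 0 ->
  (\sum_(u : V | (u != 0%R) && (u != v)) c = (2 ^ N.+1 - 2) * c)%N.
Proof.
move=> nz_v; have := cardsD1 v [set u : V | u != 0].
rewrite card_rV_neq0 inE nz_v => /(congr1 predn); rewrite -subn1 -subnDA /= => ->.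
by rewrite -sum_nat_const; apply: eq_bigl => u; rewrite !inE andbC.
Qed.

(* The lines through <<v>> are the <<v + u>>, each one hit twice (by u and by
   v + u) as u runs over the other points. *)
Lemma card_ms_point_bound K w v : (0 < N)%N -> r_bounded 1 w K -> v != 0 ->
  (card_ms K + (2 ^ N - 2) * K <<v>>%MS <= (2 ^ N - 1) * w)%N.
Proof.
move=> N_gt0 bK nz_v; pose others u := (u != 0) && (u != v).
pose s := (\sum_(u | others u) K <<u>>%MS)%N.
have card_K : card_ms K = (K <<v>>%MS + s)%N by rewrite card_ms_rV (bigD1 v).
have others_translate u : others (v + u) = others u.
  rewrite /others addr_eq0 oppmx_F2 andbC [v == u]eq_sym; congr (_ && _).
  by apply/idP/idP => [|nz_u]; [apply: contraNneq => ->; rewrite addr0 | apply: line_third_neqv].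
have sum_lines : (\sum_(u | others u) mult K <<(v + u)%MS>>%MS
    = (2 ^ N.+1 - 2) * K <<v>>%MS + 2 * s)%N.
  rewrite (eq_bigr (fun u => K <<v>>%MS + K <<u>>%MS + K <<v + u>>%MS))%N; last first.
    by move=> u /andP[nz_u neq_uv]; rewrite mult_line.
  rewrite !big_split /= sum_rV_neq0D1_const // mul2n -addnn addnA; congr (_ + _)%N.
  rewrite /s (reindex_inj (addrI v)) /=; apply: eq_big => [u|u _]; first exact: others_translate.
  by rewrite addrA addmx_F2 add0r.
have : (\sum_(u | others u) mult K <<(v + u)%MS>>%MS <= (2 ^ N.+1 - 2) * w)%N.
  rewrite -(sum_rV_neq0D1_const _ nz_v); apply: leq_sum => u /andP[nz_u neq_uv].
  exact/bK/genmx_line.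
rewrite sum_lines card_K expnS; have : (2 <= 2 ^ N)%N by rewrite -{1}(expn1 2) leq_exp2l.
move: (2 ^ N)%N => x; nia.
Qed.

Lemma card_ms_le_max K : exists2 v : V, v != 0 & (card_ms K <= (2 ^ N.+1 - 1) * K <<v>>%MS)%N.
Proof.
have [v nz_v maxv] :=
  arg_maxnP (fun v : V => K <<v>>%MS) (P := fun v => v != 0) (const_mx1_neq0 _ _ _).
exists v; rewrite // card_ms_rV -sum_rV_neq0_const; apply: leq_sum => u; exact: maxv.
Qed.

Lemma r_bounded_card_ms K w : (0 < N)%N -> r_bounded 1 w K -> exists M,
  (card_ms K <= (2 ^ N.+1 - 1) * M)%N /\ (card_ms K + (2 ^ N - 2) * M <= (2 ^ N - 1) * w)%N.
Proof.
move=> N_gt0 bK; have [v nz_v le_max] := card_ms_le_max K.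
by exists (K <<v>>%MS); split; last exact: card_ms_point_bound.
Qed.

Lemma mult_const_line c S : S \in pg_subspaces F2 N 1 -> mult (fun=> c) S = (3 * c)%N.
Proof. by case/pg_line_rV => v [u [nz_v nz_u neq_uv ->]]; rewrite mult_line //; lia. Qed.

Lemma card_ms_const c : card_ms (fun _ : 'M[F2]_N.+1 => c) = ((2 ^ N.+1 - 1) * c)%N.
Proof. by rewrite card_ms_rV sum_rV_neq0_const. Qed.

Definition off_hyperplane (f : 'cV[F2]_N.+1) (P : 'M[F2]_N.+1) : nat := ~~ (P <= kermx f)%MS.

Lemma off_hyperplane_rV f v : off_hyperplane f <<v>>%MS = (v *m f != 0).
Proof. by rewrite /off_hyperplane genmxE sub_kermx. Qed.

Lemma mult_off_hyperplane_line f S :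
  S \in pg_subspaces F2 N 1 -> (mult (off_hyperplane f) S <= 2)%N.
Proof.
case/pg_line_rV => v [u [nz_v nz_u neq_uv ->]].
by rewrite mult_line // !off_hyperplane_rV mulmxDl count_rV1_F2_neq0.
Qed.

(* Translation by a vector e off the hyperplane swaps the two sides of it. *)
Lemma card_ms_off_hyperplane f : f != 0 -> card_ms (off_hyperplane f) = (2 ^ N)%N.
Proof.
move=> nz_f; have [e nz_ef] : exists e : V, e *m f != 0.
  case: (pickP (fun i => row i f != 0)) => [i nz_fi | f0].
    by exists (delta_mx 0 i); rewrite -rowE.
  by case/eqP: nz_f; apply/row_matrixP => i; rewrite row0; apply/eqP/negbFE/f0.
pose c (v : V) : nat := v *m f != 0.
have flip v : (c v + c (v + e)%R = 1)%N.
  rewrite /c mulmxDl; have [-> | nz_vf] := eqVneq (v *m f) 0; first by rewrite add0r nz_ef.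
  by rewrite (rV1_F2_nz_eq nz_vf nz_ef) addmx_F2 eqxx.
have sum_c : (\sum_(v : V) c v = 2 ^ N)%N.
  apply/eqP; rewrite -(eqn_pmul2l (isT : 0 < 2)%N) mul2n -addnn.
  rewrite {2}(reindex_inj (addrI e)) -big_split /= (eq_bigr (fun=> 1%N)) => [|v _]; last first.
    by rewrite addrC flip.
  by rewrite sum1_card card_mx card_Fp // mul1n expnS.
rewrite card_ms_rV -sum_c [RHS](bigD1 0) //= {1}/c mul0mx eqxx add0n.
by apply: eq_bigr => v _; rewrite off_hyperplane_rV.
Qed.

End BinaryProjectiveSpace.

Local Close Scope ring_scope.

Theorem mainTheorem3 (t : nat) :
  [/\ is_m ('F_2 : finFieldType) 3 1 (3 * t + 2) (15 * t + 8),
      is_m ('F_2 : finFieldType) 3 1 (3 * t + 3) (15 * t + 15)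
    & is_m ('F_2 : finFieldType) 3 1 (3 * t + 4) (15 * t + 16)].
Proof.
have upper w (K : 'M[F2]_4 -> nat) : r_bounded 1 w K ->
    exists M, card_ms K <= 15 * M /\ card_ms K + 6 * M <= 7 * w.
  exact: r_bounded_card_ms.
pose f : 'cV[F2]_4 := const_mx 1%R.
pose P0 := <<(const_mx 1%R : 'rV[F2]_4)>>%MS.
split; split; try by move=> K /upper[M]; lia.
- exists (fun P => t + off_hyperplane f P); split.
    move=> S S_line; rewrite mult_add mult_const_line //.
    by have := mult_off_hyperplane_line f S_line; lia.
  by rewrite card_ms_add card_ms_const card_ms_off_hyperplane ?const_mx1_neq0.
- exists (fun _ => t.+1); split; first by move=> S /mult_const_line ->; lia.
  by rewrite card_ms_const; lia.
- exists (fun P => t.+1 + (P == P0)); split.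
    move=> S S_line; rewrite mult_add mult_const_line //.
    by apply: leq_trans (leq_add (leqnn _) (mult_pt_indicator_le1 P0 S)) _; lia.
  by rewrite card_ms_add card_ms_const card_ms_pt_indicator ?genmx_point ?const_mx1_neq0 //; lia.
Qed.
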